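(* Let $(A,f)$ be a finite-dimensional abelian quadratic Lie algebra over a field $\mathbb{K}$ of characteristic zero, let $d$ be an $f$-skew-symmetric derivation of $A$, and let $(A_b,f_b)$ be the one-dimensional double extension of $(A,f)$ by $(b,d)$. Then $A_b$ is $2$-step nilpotent if and only if $d\neq 0$ and $d^2=0$.
   Context: A quadratic Lie algebra $(A,f)$ is a Lie algebra with a non-degenerate symmetric invariant bilinear form $f$ (invariance: $f([x,y],z)+f(y,[x,z])=0$); here $A$ is abelian so every linear map is a derivation. A linear map $d$ is $f$-skew-symmetric if $f(d(x),y)+f(x,d(y))=0$. The one-dimensional double extension of $(A,f)$ by $(b,d)$ is $A_b=\mathbb{K}b\oplus A\oplus\mathbb{K}\beta$ with bracket $[\lambda b+a+\mu\beta,\lambda' b+a'+\mu'\beta]=\lambda d(a')-\lambda' d(a)+[a,a']_A+f(d(a),a')\beta$ and form $f_b(\lambda b+a+\mu\beta,\lambda' b+a'+\mu'\beta)=\lambda\mu'+\lambda'\mu+f(a,a')$. $2$-step nilpotent means $[L,[L,L]]=0\neq[L,L]$. *)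

From HB Require Import structures.
From mathcomp Require Import all_boot all_order all_algebra.
Set Implicit Arguments. Unset Strict Implicit. Unset Printing Implicit Defensive.
Import GRing.Theory.
Local Open Scope ring_scope.

(* Elements of the double extension A_b = K b (+) A (+) K beta are encoded as
   triples (lambda, a, mu) standing for lambda b + a + mu beta. *)
Definition dext (K : fieldType) (A : vectType K) := (K * A * K)%type.

(* Bracket of the one-dimensional double extension of the ABELIAN quadratic
   Lie algebra (A, f) by (b, d):
   [l b + a + m beta, l' b + a' + m' beta]
     = l d(a') - l' d(a) + [a,a']_A + f(d a, a') beta,  with [a,a']_A = 0. *)
Definition dext_bracket (K : fieldType) (A : vectType K)
    (f : A -> A -> K) (d : A -> A) (x y : dext A) : dext A :=
  let: (l, a, m) := x in let: (l', a', m') := y in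
  (0, l *: d a' - l' *: d a, f (d a) a').

Definition dext_form (K : fieldType) (A : vectType K)
    (f : A -> A -> K) (x y : dext A) : K :=
  let: (l, a, m) := x in let: (l', a', m') := y in l * m' + l' * m + f a a'.

(* Since the bracket is bilinear, [L,L] (span of all brackets) is nonzero iff
   some bracket is nonzero, and [L,[L,L]] = 0 iff all [x,[y,z]] vanish. *)
Definition two_step_nilpotent (T : zmodType) (br : T -> T -> T) : Prop :=
  (forall x y z : T, br x (br y z) = 0) /\ (exists x y : T, br x y != 0).

From HB Require Import structures.
From mathcomp Require Import all_boot all_order all_algebra.
Import GRing.Theory.
Local Open Scope ring_scope.

(* The derived algebra of A_b lies in d(A) (+) K beta.  Bracketing
   l b + a + m beta with w + c beta, w in d(A), gives
   l d w + f(d a, w) beta = l d w - f(a, d w) beta, so [A_b,[A_b,A_b]] = 0 once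
   d^2 = 0; conversely [b,[b,a]] = d^2 a.  Moreover [b,a] = d a while every
   bracket vanishes when d = 0, so A_b is non-abelian iff d <> 0. *)

Section DoubleExtension.

Variables (K : fieldType) (A : vectType K).
Variables (f : A -> A -> K) (d : {linear A -> A}).
Hypothesis f_linl : forall (c : K) (x y z : A), f (c *: x + y) z = c * f x z + f y z.
Hypothesis f_sym : forall x y : A, f x y = f y x.
Hypothesis d_skew : forall x y : A, f (d x) y + f x (d y) = 0.

Local Notation br := (dext_bracket f d).

Lemma form0l (z : A) : f 0 z = 0.
Proof.
have := f_linl 1 0 0 z; rewrite scale1r addr0 mul1r => /esym.
by move/(canRL (addrK _)); rewrite subrr.
Qed.

Lemma form0r (z : A) : f z 0 = 0.
Proof. by rewrite f_sym form0l. Qed.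

Lemma dext_bracket_bA (a : A) : br (1, 0, 0) (0, a, 0) = (0, d a, 0).
Proof. by rewrite /dext_bracket scale1r scale0r subr0 linear0 form0l. Qed.

Lemma dext_bracket_kerd (l l' m m' : K) (a a' : A) :
  d a = 0 -> d a' = 0 -> br (l, a, m) (l', a', m') = 0.
Proof. by move=> da0 da'0; rewrite /dext_bracket da0 da'0 !scaler0 subr0 form0l. Qed.

Lemma dext_bracket_nested_eq0 :
  (forall a : A, d (d a) = 0) -> forall x y z : dext A, br x (br y z) = 0.
Proof.
move=> dd [[l a] m] [[l' a'] m'] [[l'' a''] m''] /=.
set w := l' *: d a'' - l'' *: d a'.
have dw0 : d w = 0 by rewrite linearB !linearZ /= !dd oppr0 !scaler0 addr0.
have fdaw : f (d a) w = 0 by apply/eqP; rewrite -(d_skew a w) dw0 form0r addr0.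
by rewrite dw0 fdaw scaler0 scale0r subr0.
Qed.

End DoubleExtension.

Theorem corollary2p11 (K : fieldType) (A : vectType K)
    (f : A -> A -> K) (d : {linear A -> A})
    (char0 : [pchar K] =i pred0)
    (f_linl : forall (c : K) (x y z : A), f (c *: x + y) z = c * f x z + f y z)
    (f_sym : forall x y : A, f x y = f y x)
    (f_nondeg : forall x : A, (forall y : A, f x y = 0) -> x = 0)
    (d_skew : forall x y : A, f (d x) y + f x (d y) = 0) :
  two_step_nilpotent (dext_bracket f d) <->
  ((exists x : A, d x != 0) /\ (forall x : A, d (d x) = 0)).
Proof.
split.
- case=> nested0 [[[l a] m] [[[l' a'] m'] br_neq0]]; split.
  + have [da0 | ] := eqVneq (d a) 0; last by exists a.
    have [da'0 | ] := eqVneq (d a') 0; last by exists a'.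
    by rewrite dext_bracket_kerd ?eqxx in br_neq0.
  + move=> a0; have := nested0 (1, 0, 0) (1, 0, 0) (0, a0, 0).
    by rewrite !dext_bracket_bA // => -[].
- case=> [[a da_neq0] dd]; split; first exact: dext_bracket_nested_eq0.
  exists (1, 0, 0), (0, a, 0); rewrite dext_bracket_bA //.
  by apply: contra da_neq0 => /eqP[->].
Qed.
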